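(* Let $(A,\mathfrak{m})$ be a local ring that is the colimit of a directed system $(A_n,\mathfrak{m}_n)_{n\ge0}$ of local rings (with local transition homomorphisms). If $(A_n,\mathfrak{m}_n)$ is regular for all $n\gg0$, then $(A,\mathfrak{m})$ is regular.
   Context: A local ring $(R,\mathfrak{m})$ (not necessarily Noetherian) is regular if the natural surjection $\operatorname{Sym}_{R/\mathfrak{m}}(\mathfrak{m}/\mathfrak{m}^2)\to\bigoplus_{d\ge0}\mathfrak{m}^d/\mathfrak{m}^{d+1}$ is an isomorphism. *)

From HB Require Import structures.
From mathcomp Require Import all_boot all_order all_algebra.
From mathcomp Require Import mpoly.
Set Implicit Arguments. Unset Strict Implicit. Unset Printing Implicit Defensive.
Import Order.TTheory GRing.Theory.
Local Open Scope ring_scope.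

(* Non-units of a commutative ring. In a local ring these form the maximal ideal. *)
Definition nonunit (R : comUnitRingType) (x : R) : Prop := x \isn't a GRing.unit.

Definition is_local (R : comUnitRingType) : Prop :=
  (1 : R) != 0 /\ forall x y : R, nonunit x -> nonunit y -> nonunit (x + y).

Definition local_hom (R S : comUnitRingType) (f : R -> S) : Prop :=
  forall x, nonunit x -> nonunit (f x).

Fixpoint mpow (R : comUnitRingType) (d : nat) : R -> Prop :=
  match d with
  | 0 => fun _ => True
  | d'.+1 => fun x => exists (k : nat) (a b : 'I_k -> R),
        (forall j, mpow d' (a j) /\ nonunit (b j)) /\ x = \sum_(j < k) a j * b j
  end.

(* Regularity of a local ring (R, m) with residue field k = R/m:
   the natural graded surjection Sym_k(m/m^2) -> gr_m(R) = (+)_d m^d/m^(d+1)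
   is injective (hence an isomorphism).  Unfolded elementwise: Sym_k(m/m^2)
   is the polynomial algebra over k on symbols [x] (x in m) modulo the linear
   relations sum_i a_i [x_i] = 0 whenever sum_i a_i x_i in m^2.  Every element
   of Sym^d is represented, for some finite family x_1..x_r in m, by a homogeneous
   F in R[X_1..X_r] of degree d (coefficients read mod m); its image in
   m^d/m^(d+1) is the class of F(x_1,..,x_r).  Injectivity says: if F(x) lies in
   m^(d+1) then the class of F in Sym^d vanishes, i.e. F lies in the kernel of
   R[X] -> k[X] -> Sym_k(m/m^2), X_i |-> [x_i], which is the ideal
   m R[X] + ( sum_i a_i X_i : sum_i a_i x_i in m^2 ). *)
Definition regular_local (R : comUnitRingType) : Prop :=
  forall (r d : nat) (x : 'I_r -> R) (F : {mpoly R[r]}),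
    (forall i, nonunit (x i)) ->
    F \is d.-homog ->
    mpow d.+1 F.@[x] ->
    exists (P : {mpoly R[r]}) (k : nat) (G : 'I_k -> {mpoly R[r]}) (a : 'I_k -> 'I_r -> R),
      (forall mon, nonunit (P@_mon)) /\
      (forall j, mpow 2 (\sum_(i < r) a j i * x i)) /\
      F = P + \sum_(j < k) G j * (\sum_(i < r) a j i *: 'X_i).

Fixpoint trans (A : nat -> comUnitRingType) (f : forall n, A n -> A n.+1)
  (n k : nat) : A n -> A (k + n)%N :=
  match k return A n -> A (k + n)%N with
  | 0 => fun a => a
  | k'.+1 => fun a => f (k' + n)%N (@trans A f n k' a)
  end.

(* (B, g) is the colimit of the directed system (A_n, f_n)_n of rings:
   g_n : A_n -> B compatible with the f_n, every element of B comes from some A_n,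
   and g_n a = 0 iff a becomes 0 in some A_(k+n)  (standard description of a
   filtered colimit of rings). *)
Definition is_colimit (A : nat -> comUnitRingType)
  (f : forall n, {rmorphism A n -> A n.+1}) (B : comUnitRingType)
  (g : forall n, {rmorphism A n -> B}) : Prop :=
  [/\ forall n (a : A n), g n.+1 (f n a) = g n a,
      forall b : B, exists n (a : A n), g n a = b &
      forall n (a : A n), g n a = 0 -> exists k, @trans A (fun m => f m : A m -> A m.+1) n k a = 0].

(** Each instance of the regularity condition involves finitely many data: the
    elements x_i of the maximal ideal, the coefficients of F, and an expression
    of F(x) as an element of m^(d+1).  All of them lift to a single stage A_m;
    the lifted F(x') and the lifted expression have the same image in the
    colimit, so they agree at a later stage A_n.  Regularity of A_n puts the
    lifted F into the kernel ideal, and the local map A_n -> A carries that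
    witness to A. *)
From HB Require Import structures.
From mathcomp Require Import all_boot all_order all_algebra.
From mathcomp Require Import mpoly.
Set Implicit Arguments. Unset Strict Implicit. Unset Printing Implicit Defensive.
Import GRing.Theory.
Local Open Scope ring_scope.

Definition eventually (P : nat -> Prop) : Prop :=
  exists N, forall m, (N <= m)%N -> P m.

Lemma eventually_and P Q :
  eventually P -> eventually Q -> eventually (fun m => P m /\ Q m).
Proof.
move=> [N1 HP] [N2 HQ]; exists (maxn N1 N2) => m; rewrite geq_max => /andP[h1 h2].
by split; [exact: HP | exact: HQ].
Qed.

Lemma eventually_all_in (T : eqType) (s : seq T) (P : T -> nat -> Prop) :
  {in s, forall t, eventually (P t)} ->
  eventually (fun m => {in s, forall t, P t m}).
Proof.
elim: s => [|t s IH] Hs; first by exists 0%N.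
have Ht : eventually (P t) by apply: Hs; rewrite mem_head.
have Hs' : {in s, forall u, eventually (P u)}.
  by move=> u hu; apply: Hs; rewrite in_cons hu orbT.
have [N HN] := eventually_and Ht (IH Hs').
exists N => m /HN [Ptm Psm] u; rewrite in_cons => /predU1P [-> // | /Psm //].
Qed.

Lemma eventually_all_ord k (P : 'I_k -> nat -> Prop) :
  (forall j, eventually (P j)) -> eventually (fun m => forall j, P j m).
Proof.
move=> H; have [N HN] := @eventually_all_in _ (enum 'I_k) P (fun j _ => H j).
by exists N => m /HN Hm j; apply: Hm; rewrite mem_enum.
Qed.

Lemma nonunit_of_rmorph (R S : comUnitRingType) (h : {rmorphism R -> S}) x :
  nonunit (h x) -> nonunit x.
Proof. exact/contra/rmorph_unit. Qed.

Lemma mpow_local_hom (R S : comUnitRingType) (h : {rmorphism R -> S}) d x :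
  local_hom h -> mpow d x -> mpow d (h x).
Proof.
move=> hl; elim: d x => [//|d IH] x /= [k [a [b [Hab ->]]]].
exists k, (h \o a), (h \o b); split.
  by move=> j; case: (Hab j) => Ha Hb; split; [exact: IH | exact: hl].
by rewrite rmorph_sum; apply: eq_bigr => j _; rewrite rmorphM.
Qed.

Lemma meval_map_mpoly (R S : comUnitRingType) (h : {rmorphism R -> S}) r
    (p : {mpoly R[r]}) (v : 'I_r -> R) :
  (map_mpoly h p).@[h \o v] = h p.@[v].
Proof.
rewrite [in LHS](mpolyE p) [in RHS](mpolyE p) (raddf_sum (map_mpoly h)).
rewrite !(big_morph (meval _) (mevalD _) (meval0 _)) (rmorph_sum h).
apply: eq_bigr => m _ /=; rewrite map_mpolyZ map_mpolyX !mevalZ !mevalX.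
by rewrite rmorphM rmorph_prod; congr (_ * _); apply: eq_bigr => i _; rewrite rmorphXn.
Qed.

Lemma dhomog_map_mpoly (R S : comUnitRingType) (h : {rmorphism R -> S}) r d
    (p : {mpoly R[r]}) :
  p \is d.-homog -> map_mpoly h p \is d.-homog.
Proof.
move=> /dhomog_mf hp; apply/dhomogP => m; rewrite mcoeff_msupp mcoeff_map_mpoly.
by move=> hm; apply: hp; rewrite mcoeff_msupp; apply: contraNneq hm => ->; rewrite raddf0.
Qed.

Lemma map_mpoly_lift_dhomog (R S : comUnitRingType) (h : {rmorphism R -> S}) r d
    (F : {mpoly S[r]}) :
  F \is d.-homog -> {in msupp F, forall m, exists c, h c = F@_m} ->
  exists F' : {mpoly R[r]}, F' \is d.-homog /\ map_mpoly h F' = F.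
Proof.
move=> /dhomog_mf hF hc.
suff [F' HF'] : exists F' : {mpoly R[r]}, F' \is d.-homog /\
    map_mpoly h F' = \sum_(m <- msupp F) F@_m *: 'X_[m].
  by exists F'; rewrite -mpolyE in HF'.
elim: (msupp F) hF hc => [|m s IH] hF hc; first by exists 0; rewrite dhomog0 raddf0 big_nil.
have sub_s u : u \in s -> u \in m :: s by rewrite in_cons => ->; rewrite orbT.
have [F' [hF' HF']] := IH (fun u hu => hF u (sub_s u hu)) (fun u hu => hc u (sub_s u hu)).
have [c hcm] := hc m (mem_head _ _).
exists (c *: 'X_[m] + F'); rewrite big_cons -HF' -hcm raddfD /= map_mpolyZ map_mpolyX.
by rewrite dhomogD ?dhomogZ // dhomogX hF ?mem_head.
Qed.

Definition in_sym_kernel (R : comUnitRingType) r (x : 'I_r -> R)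
    (F : {mpoly R[r]}) : Prop :=
  exists (P : {mpoly R[r]}) (k : nat) (G : 'I_k -> {mpoly R[r]}) (a : 'I_k -> 'I_r -> R),
    (forall mon, nonunit (P@_mon)) /\
    (forall j, mpow 2 (\sum_(i < r) a j i * x i)) /\
    F = P + \sum_(j < k) G j * (\sum_(i < r) a j i *: 'X_i).

Lemma in_sym_kernel_map (R S : comUnitRingType) (h : {rmorphism R -> S}) r
    (x' : 'I_r -> R) (x : 'I_r -> S) (F' : {mpoly R[r]}) (F : {mpoly S[r]}) :
  local_hom h -> (forall i, h (x' i) = x i) -> map_mpoly h F' = F ->
  in_sym_kernel x' F' -> in_sym_kernel x F.
Proof.
move=> hl hx <- [P [k [G [a [hP [ha ->]]]]]].
exists (map_mpoly h P), k, (map_mpoly h \o G), (fun j i => h (a j i)); split; [|split].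
- by move=> mon; rewrite mcoeff_map_mpoly; exact: hl.
- move=> j; have := mpow_local_hom hl (ha j).
  by rewrite rmorph_sum; under eq_bigr do rewrite rmorphM hx.
- rewrite rmorphD rmorph_sum; congr (_ + _); apply: eq_bigr => j _.
  rewrite rmorphM rmorph_sum; congr (_ * _); apply: eq_bigr => i _.
  by rewrite /= map_mpolyZ map_mpolyX.
Qed.

Section DirectedColimit.

Variables (A : nat -> comUnitRingType) (f : forall n, {rmorphism A n -> A n.+1}).
Variables (B : comUnitRingType) (g : forall n, {rmorphism A n -> B}).
Hypothesis hfloc : forall n, local_hom (f n).
Hypothesis hcolim : is_colimit f g.

Fixpoint trans_rmorph n k : {rmorphism A n -> A (k + n)%N} :=
  match k return {rmorphism A n -> A (k + n)%N} with
  | 0 => idfun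
  | k'.+1 => (f (k' + n)%N \o trans_rmorph n k')%FUN
  end.
Arguments trans_rmorph : clear implicits.

Lemma trans_rmorphE n k a :
  trans_rmorph n k a = @trans A (fun m => f m : A m -> A m.+1) n k a.
Proof. by elim: k => //= k ->. Qed.

Lemma trans_rmorph_local n k : local_hom (trans_rmorph n k).
Proof. by elim: k => //= k IH a /IH; exact: hfloc. Qed.

Lemma colim_trans n k a : g (k + n)%N (trans_rmorph n k a) = g n a.
Proof. by case: hcolim => hgf _ _; elim: k => //= k IH; rewrite hgf IH. Qed.

Lemma colim_eq n (a a' : A n) :
  g n a = g n a' -> exists k, trans_rmorph n k a = trans_rmorph n k a'.
Proof.
case: hcolim => _ _ hker /eqP; rewrite -subr_eq0 -rmorphB => /eqP /hker [k].
by rewrite -trans_rmorphE rmorphB => /eqP; rewrite subr_eq0 => /eqP; exists k.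
Qed.

Lemma eventually_preimage b : eventually (fun m => exists a : A m, g m a = b).
Proof.
case: hcolim => _ hsurj _; have [n [a <-]] := hsurj b.
exists n => m /subnK <-; exists (trans_rmorph n (m - n) a); exact: colim_trans.
Qed.

Lemma colim_local n : local_hom (g n).
Proof.
move=> a Ha; apply/negP => /unitrP [b [_ hba]].
have [N HN] := eventually_preimage b.
have [c hc] := HN (N + n)%N (leq_addr _ _).
pose a' := trans_rmorph n N a.
have [k hk] : exists k, trans_rmorph _ k (a' * c) = trans_rmorph _ k 1.
  by apply: colim_eq; rewrite rmorphM rmorph1 hc colim_trans.
have : nonunit (trans_rmorph _ k a') by do 2 apply: trans_rmorph_local.
by rewrite rmorph1 rmorphM in hk; move/negP; apply; apply/unitrPr; exists (trans_rmorph _ k c).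
Qed.

Lemma eventually_mpow_preimage d b :
  mpow d b -> eventually (fun m => exists a : A m, g m a = b /\ mpow d a).
Proof.
elim: d b => [|d IH] b /=.
  move=> _; have [N HN] := eventually_preimage b.
  by exists N => m /HN [a ha]; exists a.
move=> [k [a [c [Hac ->]]]].
have [N HN] : eventually (fun m => forall j,
    (exists a' : A m, g m a' = a j /\ mpow d a') /\ exists c' : A m, g m c' = c j).
  apply: eventually_all_ord => j; apply: eventually_and; last exact: eventually_preimage.
  by apply: IH; case: (Hac j).
exists N => m /HN Hm.
have [a' ha'] := fin_all_exists (fun j => proj1 (Hm j)).
have [c' hc'] := fin_all_exists (fun j => proj2 (Hm j)).
exists (\sum_(j < k) a' j * c' j); split.
  by rewrite rmorph_sum; apply: eq_bigr => j _; rewrite rmorphM hc'; case: (ha' j) => ->.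
exists k, a', c'; split => // j; split; first by case: (ha' j).
by apply: (@nonunit_of_rmorph _ _ (g m)); rewrite hc'; case: (Hac j).
Qed.

End DirectedColimit.

Unset Implicit Arguments.
Set Strict Implicit.

Theorem lemma3p14
  (A : nat -> comUnitRingType)
  (f : forall n, {rmorphism A n -> A n.+1})
  (B : comUnitRingType)
  (g : forall n, {rmorphism A n -> B})
  (hAloc : forall n, is_local (A n))
  (hfloc : forall n, local_hom (f n))
  (hBloc : is_local B)
  (hcolim : is_colimit f g)
  (hreg : exists N, forall n, (N <= n)%N -> regular_local (A n)) :
  regular_local B.
Proof.
move=> r d x F hx hF hFx; case: hreg => N hN.
have lift_x : eventually (fun m => forall i, exists a : A m, g m a = x i).
  exact: eventually_all_ord (fun i => eventually_preimage hcolim (x i)).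
have lift_F : eventually (fun m =>
    {in msupp F, forall mon, exists c : A m, g m c = F@_mon}).
  exact: eventually_all_in (fun mon _ => eventually_preimage hcolim F@_mon).
have ge_N : eventually (fun m => (N <= m)%N) by exists N.
have [m Hm] := eventually_and (eventually_and lift_x lift_F)
  (eventually_and (eventually_mpow_preimage hcolim hFx) ge_N).
have [[hx' hF'] [[w [hw hwmpow]] hNm]] := Hm m (leqnn m).
have [x' {}hx'] := fin_all_exists hx'.
have [F' [hF'd {}hF']] := map_mpoly_lift_dhomog hF hF'.
have [k hk] : exists k, trans_rmorph f m k F'.@[x'] = trans_rmorph f m k w.
  by apply: (colim_eq hcolim); rewrite hw -meval_map_mpoly hF'; apply: meval_eq.
pose T := trans_rmorph f m k.
have hTg a : g (k + m)%N (T a) = g m a by exact: colim_trans.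
apply: (@in_sym_kernel_map _ _ (g (k + m)%N) _ (T \o x') _ (map_mpoly T F')).
- exact: colim_local.
- by move=> i; rewrite /= hTg hx'.
- by apply/mpolyP => mon; rewrite -hF' !mcoeff_map_mpoly; exact: hTg.
apply: (hN _ (leq_trans hNm (leq_addl _ _)) r d).
- by move=> i; apply: (@nonunit_of_rmorph _ _ (g (k + m)%N)); rewrite /= hTg hx'.
- exact: dhomog_map_mpoly.
- by rewrite meval_map_mpoly hk; apply: mpow_local_hom => //; exact: trans_rmorph_local.
Qed.
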